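(* Let $G$ be a finite group. Then $G$ contains an element whose order is a composite number if and only if $g(OD(G))=3$.
   Context: For a finite group $G$, $o(x)$ denotes the order of $x\in G$. The order-divisor graph $OD(G)$ is the simple undirected graph with vertex set $G$, in which two distinct vertices $x,y$ are adjacent if and only if $o(x)\neq o(y)$ and either $o(x)\mid o(y)$ or $o(y)\mid o(x)$. The girth $g(\Gamma)$ of a graph $\Gamma$ is the length of a shortest cycle in $\Gamma$ (taken to be $0$ if $\Gamma$ has no cycle). *)

From mathcomp Require Import all_boot all_fingroup.
Set Implicit Arguments. Unset Strict Implicit. Unset Printing Implicit Defensive.

Definition composite (n : nat) : bool := (1 < n) && ~~ prime n.

Definition od_adj (gT : finGroupType) : rel gT :=
  fun x y => [&& x != y, #[x]%g != #[y]%g & (#[x]%g %| #[y]%g) || (#[y]%g %| #[x]%g)].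

Definition has_cycle_len (T : finType) (e : rel T) (k : nat) : bool :=
  (2 < k) && [exists t : k.-tuple T, uniq t && path.cycle e t].

(* Girth: least length of a cycle, 0 if there is no cycle.  A cycle has
   distinct vertices, so its length is at most #|T|. *)
Definition girth (T : finType) (e : rel T) : nat :=
  head 0 [seq k <- iota 0 #|T|.+1 | has_cycle_len e k].

(* An element x of composite order n yields the triangle 1, x^(n/p), x in OD(G), where p is
   the least prime divisor of n: the orders 1, p, n are distinct and form a divisibility chain.
   Conversely, the orders along a triangle are three distinct, pairwise comparable (for
   divisibility) numbers; any orientation of a triangle contains a directed path of length
   two, so the orders contain a strict chain u | v | w, and w has the proper nontrivial
   divisor v. Since a cycle has length at least 3, a triangle means girth 3. *)
From mathcomp Require Import all_boot all_fingroup all_solvable.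

Set Implicit Arguments.
Unset Strict Implicit.
Unset Printing Implicit Defensive.

Section Girth.

Variables (T : finType) (e : rel T).

Lemma has_cycle_len_le_card k : has_cycle_len e k -> k <= #|T|.
Proof.
case/andP=> _ /existsP[t /andP[ut _]].
by rewrite -(size_tuple t) -(card_uniqP ut) max_card.
Qed.

Lemma girth_eq3 : girth e = 3 <-> has_cycle_len e 3.
Proof.
rewrite /girth; split=> [girth3 | cyc3].
  have : 3 \in [seq k <- iota 0 #|T|.+1 | has_cycle_len e k].
    by move: girth3; case: [seq k <- _ | _] => //= k s ->; apply: mem_head.
  by rewrite mem_filter => /andP[].
have /subnK <- := has_cycle_len_le_card cyc3.
by rewrite addnS !addnS /= cyc3.
Qed.

Lemma has_cycle3P : irreflexive e ->
  reflect (exists x y z, [&& e x y, e y z & e z x]) (has_cycle_len e 3).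
Proof.
move=> irr_e; apply: (iffP andP) => [[_ /existsP[t]] | [x [y [z /and3P[exy eyz ezx]]]]].
  by case: t => -[|x [|y [|z []]]] // _ /andP[_] /=; rewrite andbT; exists x, y, z.
have neq u v : e u v -> u != v by apply: contraTneq => ->; rewrite irr_e.
split=> //; apply/existsP; exists [tuple x; y; z].
by rewrite /= !inE negb_or neq // (neq y) // eq_sym neq //= exy eyz ezx.
Qed.

End Girth.

Definition dvdn_comparable (m n : nat) : bool := (m %| n) || (n %| m).

Lemma composite_dvdn_chain u v w :
  u %| v -> v %| w -> u != v -> v != w -> 0 < w -> composite w.
Proof.
move=> dvd_uv dvd_vw neq_uv neq_vw w_gt0.
have v_gt0 : 0 < v := dvdn_gt0 w_gt0 dvd_vw.
have lt_uv : u < v by rewrite ltn_neqAle neq_uv dvdn_leq.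
have lt_vw : v < w by rewrite ltn_neqAle neq_vw dvdn_leq.
have v_gt1 : 1 < v := leq_ltn_trans (dvdn_gt0 v_gt0 dvd_uv) lt_uv.
apply/andP; split; first exact: ltn_trans lt_vw.
apply: contra neq_vw => w_prime.
by apply/eqP/(prime_nt_dvdP w_prime _ dvd_vw); rewrite neq_ltn v_gt1 orbT.
Qed.

(* Any orientation of a triangle contains a directed path of length two. *)
Lemma composite_dvdn_triangle a b c :
  0 < a -> 0 < b -> 0 < c -> a != b -> b != c -> c != a ->
  dvdn_comparable a b -> dvdn_comparable b c -> dvdn_comparable c a ->
  [|| composite a, composite b | composite c].
Proof.
move=> a_gt0 b_gt0 c_gt0 nab nbc nca.
have [nba ncb nac] : [/\ b != a, c != b & a != c] by split; rewrite eq_sym.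
case/orP=> dab; case/orP=> dbc; case/orP=> dca;
first [ by rewrite (composite_dvdn_chain dab dbc) ?orbT
      | by rewrite (composite_dvdn_chain dbc dca) ?orbT
      | by rewrite (composite_dvdn_chain dca dab) ?orbT
      | by rewrite (composite_dvdn_chain dab dca) ?orbT
      | by rewrite (composite_dvdn_chain dca dbc) ?orbT
      | by rewrite (composite_dvdn_chain dbc dab) ?orbT ].
Qed.

Section OrderDivisorGraph.

Variable gT : finGroupType.

Lemma od_adjE (x y : gT) :
  od_adj x y = (#[x]%g != #[y]%g) && dvdn_comparable #[x]%g #[y]%g.
Proof. by rewrite /od_adj; case: eqP => [-> | _]; rewrite ?eqxx. Qed.

Lemma od_adj_irr : irreflexive (@od_adj gT).
Proof. by move=> x; rewrite od_adjE eqxx. Qed.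

Lemma order_expg_divn (x : gT) d : d %| #[x]%g -> #[x ^+ (#[x]%g %/ d)]%g = d.
Proof. by move=> dvd_dx; rewrite orderXdiv ?dvdn_div // divnA // mulnC mulnK. Qed.

End OrderDivisorGraph.

Theorem mainTheorem4 (gT : finGroupType) :
  (exists x : gT, composite #[x]%g) <-> girth (@od_adj gT) = 3.
Proof.
have triangleP := has_cycle3P (@od_adj_irr gT).
split=> [[x /andP[n_gt1 n_nprime]] | /girth_eq3/triangleP[a [b [c]]]].
  set n := #[x]%g in n_gt1 n_nprime; set p := pdiv n.
  have p_prime : prime p := pdiv_prime n_gt1.
  have ord_y : #[x ^+ (n %/ p)]%g = p := order_expg_divn (pdiv_dvd n).
  apply/girth_eq3/triangleP; exists 1%g, (x ^+ (n %/ p))%g, x.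
  rewrite !od_adjE ord_y order1 -/n /dvdn_comparable !dvd1n pdiv_dvd orbT /=.
  rewrite !andbT eq_sym (gtn_eqF (prime_gt1 p_prime)) (gtn_eqF n_gt1) /= andbT.
  by apply: contraNneq _ n_nprime => <-.
rewrite !od_adjE => /and3P[/andP[nab dab] /andP[nbc dbc] /andP[nca dca]].
have := composite_dvdn_triangle (order_gt0 a) (order_gt0 b) (order_gt0 c) nab nbc nca dab dbc dca.
by case/or3P=> composite_order; [exists a | exists b | exists c].
Qed.
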